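(* Let $\langle E,\rightarrow\rangle$ be a computation, $b$ a regular predicate, and $e\in E$. Then $J_b(e)$ is a join-irreducible element of the distributive lattice $\langle \mathcal{C}_b(E);\subseteq\rangle$.
   Context: A computation is a directed graph $\langle E, \rightarrow\rangle$ whose vertices (events) are partitioned among processes $p_1,\dots,p_n$, each process $p_i$ having an initial event $\bot_i$ and a final event $\top_i$; $\top$ denotes the set of final events. A subset $C\subseteq E$ is a consistent cut if for every edge $(u,v)$, $v\in C$ implies $u\in C$; $\emptyset$ and $E$ are trivial. A predicate is regular if whenever consistent cuts $C_1,C_2$ satisfy it, so do $C_1\cap C_2$ and $C_1\cup C_2$. $\mathcal{C}_b(E)$ denotes the set of non-trivial consistent cuts of $\langle E,\rightarrow\rangle$ satisfying $b$ together with the two trivial cuts $\emptyset$ and $E$ (the trivial cuts are treated as satisfying $b$); ordered by inclusion it is a distributive lattice with join $\cup$ and meet $\cap$. For an event $e$, $J_b(e)$ is the least consistent cut of $\langle E,\rightarrow\rangle$ that satisfies $b$ and contains $e$; if no such cut exists or $e\in\top$, $J_b(e)=E$. An element $a$ of a lattice is join-irreducible if it is not the least element and $a=x\sqcup y$ implies $a=x$ or $a=y$. *)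

From mathcomp Require Import all_boot.
Set Implicit Arguments. Unset Strict Implicit. Unset Printing Implicit Defensive.

(* A computation <E, ->> : events are the elements of a finite type T (E = the
   whole type), edges are the relation [edge]; [proc] partitions events among
   the processes p_1..p_n (indexed by 'I_n); [bot i], [top i] are the initial
   and final events of p_i.  "x occurs before y" = reachability [connect edge]. *)
Definition is_computation (T : finType) (edge : rel T) (n : nat)
    (proc : T -> 'I_n) (bot top : 'I_n -> T) : Prop :=
  [/\ forall i, proc (bot i) = i /\ proc (top i) = i /\ bot i != top i,
      forall e, connect edge (bot (proc e)) e,
      forall e, connect edge e (top (proc e)),
      forall i j, connect edge (bot i) (bot j) &
      forall i j, connect edge (top i) (top j)].

Definition finals (T : finType) (n : nat) (top : 'I_n -> T) : {set T} :=
  [set top i | i in 'I_n].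

Definition consistent (T : finType) (edge : rel T) (C : {set T}) : bool :=
  [forall u, forall v, edge u v ==> (v \in C) ==> (u \in C)].

Definition regular (T : finType) (edge : rel T) (b : pred {set T}) : Prop :=
  forall C1 C2 : {set T}, consistent edge C1 -> consistent edge C2 ->
    b C1 -> b C2 -> b (C1 :&: C2) /\ b (C1 :|: C2).

Definition in_Cb (T : finType) (edge : rel T) (b : pred {set T}) (C : {set T})
  : bool :=
  consistent edge C && [|| C == set0, C == setT | b C].

Definition least_cut (T : finType) (edge : rel T) (b : pred {set T}) (e : T)
    (C : {set T}) : bool :=
  [&& consistent edge C, b C, e \in C &
      [forall D : {set T}, [&& consistent edge D, b D & e \in D] ==> (C \subset D)]].

Definition Jb (T : finType) (edge : rel T) (n : nat) (top : 'I_n -> T)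
    (b : pred {set T}) (e : T) : {set T} :=
  if e \in finals top then setT
  else match [pick C | least_cut edge b e C] with
       | Some C => C
       | None => setT
       end.

Definition join_irreducible_Cb (T : finType) (edge : rel T) (b : pred {set T})
    (a : {set T}) : Prop :=
  in_Cb edge b a /\ a != set0 /\
  forall x y : {set T}, in_Cb edge b x -> in_Cb edge b y ->
    a = x :|: y -> a = x \/ a = y.

From mathcomp Require Import all_boot.
Set Implicit Arguments. Unset Strict Implicit.

(* An element [a] of C_b(E) is join-irreducible as soon as some event [x] of
   [a] lies in no smaller element of C_b(E): if [a = y :|: z], then [x] lies in
   [y] or [z], which is then all of [a].  For [Jb e] such a witness is [e]
   itself when [Jb e] is the least cut through [e], and otherwise, when
   [Jb e = E], any final event, since a consistent cut containing a final event
   contains every event. *)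

Section ConsistentCuts.

Variables (T : finType) (edge : rel T).

Lemma consistent_edge (C : {set T}) u v :
  consistent edge C -> edge u v -> v \in C -> u \in C.
Proof.
by move=> /forallP /(_ u) /forallP /(_ v) /implyP cutC /cutC /implyP.
Qed.

Lemma consistent_connect (C : {set T}) u v :
  consistent edge C -> connect edge u v -> v \in C -> u \in C.
Proof.
move=> cutC /connectP [p edge_p ->]; elim: p u edge_p => [|y p IHp] u //=.
move=> /andP [edge_uy edge_p] lastC.
exact: consistent_edge cutC edge_uy (IHp _ edge_p lastC).
Qed.

Lemma consistentT : consistent edge [set: T].
Proof. by apply/forallP => u; apply/forallP => v; rewrite !inE !implybT. Qed.

Lemma consistent_final_setT n (proc : T -> 'I_n) (bot top : 'I_n -> T)
    (C : {set T}) i :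
  is_computation edge proc bot top -> consistent edge C -> top i \in C ->
  C = setT.
Proof.
case=> _ _ to_top _ top_top cutC topC; apply/setP => x; rewrite inE.
apply: (consistent_connect cutC (to_top x)).
exact: consistent_connect cutC (top_top _ i) topC.
Qed.

Variable b : pred {set T}.

Lemma in_CbT : in_Cb edge b [set: T].
Proof. by rewrite /in_Cb consistentT eqxx orbT. Qed.

Lemma join_irreducible_Cb_witness (a : {set T}) x :
  in_Cb edge b a -> x \in a ->
  (forall z, in_Cb edge b z -> x \in z -> z \subset a -> z = a) ->
  join_irreducible_Cb edge b a.
Proof.
move=> Cb_a xa least_a; split=> //; split; first by apply/set0Pn; exists x.
move=> y z Cb_y Cb_z a_yz; have := xa; rewrite a_yz inE => /orP [xy | xz].
- by left; rewrite [RHS]least_a // a_yz subsetUl.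
- by right; rewrite [RHS]least_a // a_yz subsetUr.
Qed.

Lemma join_irreducible_CbT n (proc : T -> 'I_n) (bot top : 'I_n -> T)
    (i : 'I_n) :
  is_computation edge proc bot top -> join_irreducible_Cb edge b [set: T].
Proof.
move=> comp; apply: (@join_irreducible_Cb_witness _ (top i)) in_CbT _ _.
  by rewrite inE.
move=> z /andP [cut_z _] top_z _.
exact: consistent_final_setT comp cut_z top_z.
Qed.

Lemma join_irreducible_least_cut e (C : {set T}) :
  least_cut edge b e C -> join_irreducible_Cb edge b C.
Proof.
case/and4P=> cutC bC eC /forallP leastC.
apply: (join_irreducible_Cb_witness (x := e)) => //.
  by rewrite /in_Cb cutC bC !orbT.
move=> z /andP [cut_z /or3P [/eqP z0 | /eqP zT | bz]] ez zC.
- by rewrite z0 inE in ez.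
- by apply/eqP; rewrite eqEsubset zC zT subsetT.
- apply/eqP; rewrite eqEsubset zC; apply: (implyP (leastC z)).
  by rewrite cut_z bz ez.
Qed.

End ConsistentCuts.

Theorem lemma4 (T : finType) (edge : rel T) (n : nat) (proc : T -> 'I_n)
    (bot top : 'I_n -> T) (b : pred {set T}) (e : T) :
  is_computation edge proc bot top ->
  regular edge b ->
  join_irreducible_Cb edge b (Jb edge top b e).
Proof.
move=> comp _; have JT := join_irreducible_CbT b (proc e) comp.
rewrite /Jb; case: ifP => // _; case: pickP => // C.
exact: join_irreducible_least_cut.
Qed.
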